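(* In the 1-sided False Negative regime, let $\mathcal{S}=\{E_1,\dots,E_k\}$ be a collection of $k$ sets of edges, each with a fixed cyclic order, and assume at least one set in $\mathcal{S}$ contains some realized edge. Consider the procedure DISCOVER$(\mathcal{S})$: repeat rounds; in each round, for $i=1,\dots,k$, query the next edge $e$ in the cyclic order of $E_i$, and if the answer is ``Yes'' return $e$. Then DISCOVER finds and returns a realized edge using at most $2k|E_f|$ queries in expectation, where $E_f$ is the set containing the found edge.
   Context: Noisy query model: each edge is either realized or not (fixed arbitrarily in advance). An oracle answers queries ``Is edge $e$ realized?'' with ``Yes''/``No''; each query costs $1$; answers to distinct queries (including repeated queries of the same edge) are independent. In the 1-sided False Negative regime: for a non-realized edge the answer is always ``No''; for a realized edge the answer is ``No'' with a constant probability $p<1/2$ and ``Yes'' with probability $1-p$. *)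

From HB Require Import structures.
From mathcomp Require Import all_boot all_order all_algebra.
From mathcomp Require Import all_classical all_reals all_analysis.
Set Implicit Arguments. Unset Strict Implicit. Unset Printing Implicit Defensive.
Import Order.TTheory GRing.Theory Num.Theory.
Local Open Scope classical_set_scope.
Local Open Scope ring_scope.

(* ---- Deterministic schedule of DISCOVER(S) ----
   S = Es : seq (seq Edge), E_i = nth [::] Es i, cyclic order = list order.
   Round r: for i = 0..k-1 (k = size Es), query E_i[r mod |E_i|]
   (empty sets contribute no query). *)
Section Schedule.
Variable Edge : eqType.
Variable Es : seq (seq Edge).

Definition nonempty_sets : seq nat :=
  [seq i <- iota 0 (size Es) | (0 < size (nth [::] Es i))%N].
Definition round_len : nat := size nonempty_sets.
Definition qidx (t : nat) : nat := nth 0 nonempty_sets (t %% round_len).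
Definition qround (t : nat) : nat := t %/ round_len.
Definition qedge (t : nat) : option Edge :=
  let E := nth [::] Es (qidx t) in
  if E is x :: _ then Some (nth x E (qround t %% size E)) else None.
Definition qrealized (realized : pred Edge) (t : nat) : bool :=
  if qedge t is Some e then realized e else false.
End Schedule.

Section Oracle.
Context {d : measure_display} {T : measurableType d} {R : realType}.

Definition mutually_independent_bool (P : probability T R) (X : nat -> T -> bool) :=
  forall (I : seq nat) (b : nat -> bool), uniq I ->
    P (\bigcap_(i in [set` I]) [set w | X i w = b i]) =
    \big[*%E/1%E]_(i <- I) P [set w | X i w = b i].

Definition performed (ans : nat -> T -> bool) (t : nat) (w : T) : bool :=
  [forall s : 'I_t, ~~ ans s w].
Definition first_yes (ans : nat -> T -> bool) (t : nat) (w : T) : bool :=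
  ans t w && performed ans t w.
Definition num_queries (ans : nat -> T -> bool) (w : T) : \bar R :=
  (\sum_(0 <= t <oo) ((performed ans t w : nat)%:R)%:E)%E.
End Oracle.

From HB Require Import structures.
From mathcomp Require Import all_boot all_order all_algebra.
From mathcomp Require Import all_classical all_reals all_analysis.
From mathcomp Require Import lra measurable_realfun.
Import Order.TTheory GRing.Theory Num.Theory.
Local Open Scope classical_set_scope.
Local Open Scope ring_scope.

(* Let query t ask for a realized edge of E_f and let Q = |E_f| * L, where
   L <= k is the number of queries per round.  The queries t mod Q + i Q all
   ask for that same edge, so they are independent and each is answered "Yes"
   with probability 1 - p.  Query u is performed only if the first
   floor(u / Q) of them were answered "No", an event of probability
   p ^ floor(u / Q); summing over u bounds the expected number of queries by
   Q / (1 - p) <= 2 Q <= 2 k |E_f|.  The same events show that the probability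
   of never getting a "Yes" is at most p ^ n for every n, hence 0. *)

Section Schedule.
Local Set Implicit Arguments.
Local Unset Strict Implicit.
Context {Edge : eqType} (Es : seq (seq Edge)).

Definition query_period (t : nat) : nat :=
  size (nth [::] Es (qidx Es t)) * round_len Es.

Lemma round_len_le_size : (round_len Es <= size Es)%N.
Proof. by rewrite /round_len size_filter (leq_trans (count_size _ _)) ?size_iota. Qed.

Lemma round_len_gt0 i : nth [::] Es i != [::] -> (0 < round_len Es)%N.
Proof.
move=> Ei_neq0; have i_lt : (i < size Es)%N.
  by apply: contraNT Ei_neq0; rewrite -leqNgt => /(nth_default [::]) ->.
rewrite /round_len size_filter -has_count; apply/hasP; exists i.
  by rewrite mem_iota.
by rewrite lt0n size_eq0.
Qed.

Lemma qedge_eq_mod t1 t2 :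
  t1 = t2 %[mod query_period t2] -> qedge Es t1 = qedge Es t2.
Proof.
rewrite /query_period /qedge => eq_t.
have eq_idx : qidx Es t1 = qidx Es t2.
  have dvd_L := dvdn_mull (size (nth [::] Es (qidx Es t2))) (dvdnn (round_len Es)).
  by rewrite /qidx -(modn_dvdm t1 dvd_L) -(modn_dvdm t2 dvd_L) eq_t.
rewrite eq_idx; move: eq_t; case: (nth [::] Es (qidx Es t2)) => [//|x E] eq_t.
by rewrite /qround !modn_divl eq_t.
Qed.

Lemma qrealized_edge (realized : pred Edge) t :
  qrealized Es realized t -> exists2 e, qedge Es t = Some e & realized e.
Proof. by rewrite /qrealized; case: qedge => [e|//]; exists e. Qed.

Lemma qrealized_period_gt0 (realized : pred Edge) t :
  qrealized Es realized t -> (0 < query_period t)%N.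
Proof.
rewrite /qrealized /qedge /query_period.
case Et: (nth [::] Es (qidx Es t)) => [//|x E] _.
by rewrite muln_gt0 /= (@round_len_gt0 (qidx Es t)) ?Et.
Qed.

Lemma qrealized_period (realized : pred Edge) t i :
  qrealized Es realized t ->
  qrealized Es realized (t %% query_period t + i * query_period t).
Proof. by rewrite /qrealized (@qedge_eq_mod _ t) // addnC modnMDl modn_mod. Qed.

Lemma exists_qrealized (realized : pred Edge) :
  has (fun E => has realized E) Es -> exists t, qrealized Es realized t.
Proof.
move=> /hasP [E E_in /hasP [e e_in realized_e]].
have [j j_lt Ej] : exists2 j, (j < size Es)%N & nth [::] Es j = E.
  by exists (index E Es); [rewrite index_mem | rewrite nth_index].
have j_in : j \in nonempty_sets Es.
  by rewrite mem_filter Ej mem_iota /= j_lt andbT; case: E e_in {E_in Ej}.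
set pos := index j (nonempty_sets Es).
have pos_lt : (pos < round_len Es)%N by rewrite index_mem.
exists (index e E * round_len Es + pos)%N.
rewrite /qrealized /qedge /qidx /qround modnMDl modn_small // nth_index //.
rewrite divnMDl ?(leq_ltn_trans _ pos_lt) // divn_small // addn0 Ej.
case: E e_in {E_in Ej j_in} => [//|x E] e_in.
by rewrite modn_small ?index_mem // nth_index.
Qed.

End Schedule.

Lemma sumr_nat_divn (V : nmodType) (F : nat -> V) (M N : nat) : (0 < M)%N ->
  \sum_(0 <= t < N * M) F (t %/ M)%N = \sum_(0 <= n < N) F n *+ M.
Proof.
move=> M_gt0; elim: N => [|N IH]; first by rewrite mul0n !big_geq.
rewrite mulSnr big_nat_recr //= (big_cat_nat (leq0n (N * M)) (leq_addr M _)) /= IH.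
congr (_ + _); rewrite (eq_big_nat _ _ (F2 := fun=> F N)) ?sumr_const_nat ?addKn //.
move=> t /andP[le_Nt lt_t]; congr F; apply/eqP.
by rewrite eqn_leq -ltnS ltn_divLR // leq_divRL // le_Nt mulSnr lt_t.
Qed.

Lemma sum_expr_le_inv (R : realFieldType) (p : R) (N : nat) : 0 <= p -> p < 1 ->
  \sum_(0 <= i < N) p ^+ i <= (1 - p)^-1.
Proof.
move=> p_ge0 p_lt1; have p1_gt0 : 0 < 1 - p by rewrite subr_gt0.
rewrite big_mkord -(ler_pM2r p1_gt0) mulVf ?gt_eqF //.
have -> : (\sum_(i < N) p ^+ i) * (1 - p) = 1 - p ^+ N.
  by rewrite mulrC -opprB mulNr -subrX1 opprB.
by rewrite lerBlDr lerDl exprn_ge0.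
Qed.

Lemma lee_expr_le0 {R : realType} {p : R} {x : \bar R} : 0 <= p -> p < 1 ->
  (forall n, x <= (p ^+ n)%:E)%E -> (x <= 0)%E.
Proof.
move=> p_ge0 p_lt1 x_le.
have expr_cvg : (fun n => (p ^+ n)%:E) @ \oo --> 0%:E.
  by apply: cvg_EFin; [exact: nearW | apply: cvg_expr; rewrite ger0_norm].
change (x <= 0%:E)%E; rewrite -(cvg_lim _ expr_cvg) //.
by apply: lime_ge; [exact: cvgP expr_cvg | exact: nearW].
Qed.

Section NoAnswers.
Local Set Implicit Arguments.
Local Unset Strict Implicit.
Context {d : measure_display} {T : measurableType d} {R : realType}.
Variables (P : probability T R) (ans : nat -> T -> bool).
Hypothesis ans_measurable : forall t, measurable [set w | ans t w].
Hypothesis ans_indep : mutually_independent_bool P ans.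
Local Open Scope ereal_scope.

Definition all_no (I : seq nat) : set T :=
  \bigcap_(i in [set` I]) [set w | ans i w = false].

Lemma setC_ans t : ~` [set w | ans t w] = [set w | ans t w = false].
Proof. by apply/seteqP; split => w /=; case: (ans t w). Qed.

Lemma measurable_all_no I : measurable (all_no I).
Proof.
apply: fin_bigcap_measurable => [|i _]; first exact: finite_seq.
by rewrite -setC_ans; exact: measurableC.
Qed.

Lemma performed_all_no t w : performed ans t w <-> all_no (iota 0 t) w.
Proof.
split => [/forallP no_yes i /=|no_yes]; last first.
  by apply/forallP => i; apply/negbT/no_yes; rewrite /= mem_iota ltn_ord.
by rewrite mem_iota => /andP[_ lt_it]; exact: negbTE (no_yes (Ordinal lt_it)).
Qed.

Lemma measurable_performed t : measurable [set w | performed ans t w].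
Proof.
rewrite (_ : [set w | _] = all_no (iota 0 t)); first exact: measurable_all_no.
by apply/seteqP; split => w /performed_all_no.
Qed.

Lemma prob_all_no (p : R) (I : seq nat) : uniq I ->
    (forall i, i \in I -> P [set w | ans i w] = (1 - p)%:E) ->
  P (all_no I) = (p ^+ size I)%:E.
Proof.
move=> I_uniq yes_prob; rewrite /all_no ans_indep // (eq_big_seq (fun=> p%:E)).
  by rewrite prodEFin big_const_seq count_predT iter_mulr_1.
move=> i /yes_prob yes_i; rewrite -setC_ans probability_setC // yes_i.
by rewrite -EFinB opprB addrC subrK.
Qed.

Lemma measurable_num_queries : measurable_fun setT (num_queries (R := R) ans).
Proof.
apply: ge0_emeasurable_sum => [t w _ _|t _]; first by rewrite lee_fin.
apply/measurable_EFinP; rewrite (_ : (fun w => _) = \1_[set w | performed ans t w]).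
  exact/measurable_indic/measurable_performed.
by apply/funext => w; rewrite indicE mem_setE.
Qed.

End NoAnswers.

Section PeriodicSuccess.
Local Set Implicit Arguments.
Local Unset Strict Implicit.
Context {d : measure_display} {T : measurableType d} {R : realType}.
Variables (P : probability T R) (ans : nat -> T -> bool) (p : R) (a M : nat).
Hypothesis ans_measurable : forall t, measurable [set w | ans t w].
Hypothesis ans_indep : mutually_independent_bool P ans.
Hypotheses (p_ge0 : (0 <= p)%R) (p_lt1 : (p < 1)%R).
Hypotheses (M_gt0 : (0 < M)%N) (a_lt_M : (a < M)%N).
Hypothesis hit_prob : forall i, P [set w | ans (a + i * M) w] = (1 - p)%:E.
Local Open Scope ereal_scope.

Let hits (n : nat) : seq nat := [seq a + i * M | i <- iota 0 n]%N.

Lemma prob_all_no_hits n : P (all_no ans (hits n)) = (p ^+ n)%:E.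
Proof.
rewrite (prob_all_no ans_measurable ans_indep (p := p)) ?size_map ?size_iota //.
  rewrite map_inj_uniq ?iota_uniq // => i j /addnI /eqP.
  by rewrite eqn_pmul2r // => /eqP.
by move=> _ /mapP[i _ ->].
Qed.

Lemma performed_all_no_hits t w :
  performed ans t w -> all_no ans (hits (t %/ M)) w.
Proof.
move=> /performed_all_no no_yes j /mapP[i]; rewrite mem_iota => /andP[_ lt_i] ->.
apply: no_yes; rewrite /= mem_iota add0n (leq_trans _ (leq_divM t M)) //.
by rewrite (@leq_trans (i.+1 * M)) ?leq_pmul2r // mulSn ltn_add2r.
Qed.

Let block n w : \bar R := (M%:R * \1_(all_no ans (hits n)) w)%:E.

Lemma block_ge0 n w : 0 <= block n w.
Proof. by rewrite lee_fin mulr_ge0 ?indicE. Qed.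

Lemma measurable_block n : measurable_fun setT (block n).
Proof.
apply/measurable_EFinP/measurable_funM => //.
exact/measurable_indic/measurable_all_no.
Qed.

Lemma num_queries_le_blocks w : num_queries ans w <= \sum_(0 <= n <oo) block n w.
Proof.
apply: lime_le; first exact: is_cvg_ereal_nneg_natsum.
apply: nearW => N; apply: (@le_trans _ _ (\sum_(0 <= n < N) block n w)); last first.
  by apply: nneseries_lim_ge => n _ _; exact: block_ge0.
pose no_hits_before t := (\1_(all_no ans (hits (t %/ M))) w : R)%:E.
apply: (@le_trans _ _ (\sum_(0 <= t < N * M) no_hits_before t)).
  apply: (@le_trans _ _ (\sum_(0 <= t < N) no_hits_before t)); last first.
    apply: lee_sum_nneg_natr; last exact: leq_pmulr.
    by move=> t _ _; rewrite lee_fin indicE.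
  apply: lee_sum => t _; rewrite lee_fin /no_hits_before indicE.
  by case: (boolP (performed ans t w)) => [/performed_all_no_hits/mem_set ->|].
rewrite sumEFin (@sumr_nat_divn _ (fun n => \1_(all_no ans (hits n)) w : R)) //.
by rewrite -sumEFin; under eq_bigr do rewrite -mulr_natl.
Qed.

Lemma expected_num_queries_le :
  \int[P]_w num_queries ans w <= (M%:R / (1 - p))%:E.
Proof.
(* The cast selects the coercion of [P] under which the integral lemmas rewrite. *)
apply: (@le_trans _ _ (\int[P : measure T R]_w \sum_(0 <= n <oo) block n w)).
  apply: ge0_le_integral => //.
  - by move=> w _; apply: nneseries_ge0 => t _ _; rewrite lee_fin.
  - exact: measurable_num_queries.
  - apply: ge0_emeasurable_sum => [n w _ _|n _]; first exact: block_ge0.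
    exact: measurable_block.
  - by move=> w _; exact: num_queries_le_blocks.
have int_block n : \int[P]_w block n w = (M%:R * p ^+ n)%:E.
  rewrite /block; under eq_integral do rewrite EFinM.
  rewrite ge0_integralZl //; last exact/measurable_EFinP/measurable_indic/measurable_all_no.
  rewrite integral_indic ?setIT //; last exact: measurable_all_no.
  by rewrite EFinM; congr (_ * _); exact: prob_all_no_hits.
rewrite integral_nneseries //; last 2 first.
- by move=> n; exact: measurable_block.
- by move=> n w _; exact: block_ge0.
rewrite (eq_eseriesr (fun n _ => int_block n)); apply: lime_le.
  by apply: is_cvg_ereal_nneg_natsum => n _; rewrite lee_fin mulr_ge0 ?exprn_ge0.
apply: nearW => N; rewrite sumEFin lee_fin -mulr_sumr ler_wpM2l //.
exact: sum_expr_le_inv.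
Qed.

Lemma prob_some_yes : P [set w | exists t, ans t w] = 1.
Proof.
set Yes := [set w | exists t, ans t w].
have Yes_measurable : measurable Yes.
  rewrite (_ : Yes = \bigcup_t [set w | ans t w]); first exact: bigcupT_measurable.
  by apply/seteqP; split => w /= [t]; exists t.
have no_yes_le n : P (~` Yes) <= (p ^+ n)%:E.
  rewrite -prob_all_no_hits le_measure ?inE //.
  - exact: (measurableC Yes_measurable).
  - exact: measurable_all_no.
  by move=> w no_yes t _; apply/negbTE/negP => yes_t; apply: no_yes; exists t.
have no_yes0 : P (~` Yes) = 0.
  by apply/le_anti; rewrite measure_ge0 (lee_expr_le0 p_ge0 p_lt1 no_yes_le).
by rewrite -[Yes]setCK probability_setC ?no_yes0 ?sube0 //; exact: measurableC.
Qed.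

End PeriodicSuccess.

Theorem lemma6 (R : realType) (d : measure_display) (T : measurableType d)
  (P : probability T R) (Edge : eqType) (Es : seq (seq Edge))
  (realized : pred Edge) (p : R) (ans : nat -> T -> bool) :
  0 <= p -> p < 1 / 2 ->
  has (fun E => has realized E) Es ->
  (forall t, measurable [set w | ans t w]) ->
  mutually_independent_bool P ans ->
  (forall t, ~~ qrealized Es realized t -> forall w, ans t w = false) ->
  (forall t, qrealized Es realized t -> P [set w | ans t w] = (1 - p)%:E) ->
  P [set w | exists t, ans t w] = 1%E /\
  (forall w t, first_yes ans t w ->
     (exists2 e, qedge Es t = Some e & realized e) /\
     (\int[P]_x num_queries ans x
        <= ((2 * size Es * size (nth [::] Es (qidx Es t)))%N%:R)%:E)%E).
Proof.
move=> p_ge0 p_lt_half has_realized ans_meas ans_indep no_unrealized yes_realized.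
have p_lt1 : p < 1.
  by apply: lt_le_trans p_lt_half _; rewrite ler_pdivrMr ?mul1r ?ler1n.
have periodic_hits t : qrealized Es realized t ->
    let Q := query_period Es t in
    [/\ (0 < Q)%N, (t %% Q < Q)%N &
        forall i, P [set w | ans (t %% Q + i * Q)%N w] = (1 - p)%:E].
  move=> t_realized Q; have Q_gt0 := qrealized_period_gt0 t_realized.
  by split; rewrite ?ltn_pmod // => i; apply/yes_realized/qrealized_period.
split.
  have [t /periodic_hits [Q_gt0 _ hits_prob]] := exists_qrealized has_realized.
  exact: prob_some_yes ans_meas ans_indep p_ge0 p_lt1 Q_gt0 hits_prob.
move=> w t /andP[yes_t _].
have t_realized : qrealized Es realized t.
  by apply: contraLR yes_t => /no_unrealized ->.
split; first exact: qrealized_edge.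
have [Q_gt0 t_lt_Q hits_prob] := periodic_hits t t_realized.
apply: le_trans (expected_num_queries_le ans_meas ans_indep p_ge0 p_lt1
                   Q_gt0 t_lt_Q hits_prob) _.
rewrite lee_fin (@le_trans _ _ (2 * (query_period Es t)%:R)) //.
  have : 0 <= (query_period Es t)%:R :> R by [].
  by rewrite ler_pdivrMr ?subr_gt0 //; nra.
rewrite -natrM ler_nat /query_period -mulnA leq_mul2l /= mulnC leq_mul2r.
by rewrite round_len_le_size orbT.
Qed.
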